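(* Assume (A1)–(A6), and let $u^*(r)=u^*_{\lambda^*}(r(\lambda^* )^{-1/\theta})$, where $(u^*_{\lambda^*},\lambda^* )$ is the singular solution of Theorem 1.1 (so $u^*$ is a singular solution of $L(u)+e^{f(u)}=0$). Then $$u^*(r)=\mathcal F^{-1}\big(K r^{\theta/(\beta+1)}(1+\delta(r))\big),\qquad K=\frac{\beta+1}{\theta}(\alpha-\beta-1)^{-\frac{1}{\beta+1}},$$ where $\delta(r)\to0$ as $r\to0^+$.
   Context: $L(u)(r)=r^{-\gamma}(r^{\alpha}|u'|^{\beta}u')'$, $\theta=\gamma+2+\beta-\alpha$, $g=f^{-1}$, $\mathcal F(u)=\int_u^{\infty}e^{-f(s)/(\beta+1)}ds$ (finite and strictly decreasing under the assumptions). ''$O(g''(t))$'' means bounded by $C|g''(t)|$ for large $t$, $o(t)$ any $h$ with $h/t\to0$. (A1) $f\in C^4([0,\infty))$, $f'>0$, $f\to+\infty$. (A2) $g''(t)\to0$ and $f(g(t)+\varepsilon(t))/t\to1$ for every $\varepsilon(t)=O(g''(t))$. (A3) $g'(t)/g'(t+h(t))\to1$ for $h=o(t)$. (A4) $\frac{g''(t)}{g'(t)}\ln g'(t)\to0$. (A5)(a) $g'''(\ln g')^n=O(g'')$, $n=0,1,2$, $g^{(4)}\ln g'=O(g'')$; (b) $\sup_{s\ge t}|g''(s)|=O(g''(t))$, $g''(t+h(t))=O(g''(t))$ for $h=o(t)$. (A6) $\alpha>\beta+1$, $\beta\ge0$, $\theta>0$. Theorem 1.1: there exist $\lambda^*>0$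 and $u^*_{\lambda^*}\in C^2((0,1])$ with $L(u)+\lambda^*e^{f(u)}=0$ on $(0,1)$, $u(1)=0$, $u(r)\to+\infty$ as $r\to0^+$, and $u^*_{\lambda^*}(r)=g(Z(r))+O(g''(\ln r^{-\theta}))$, $Z(r)=\ln\{\theta^{\beta+1}(\alpha-\beta-1)\}-\ln\lambda^*-\theta\ln r+(\beta+1)\ln\{g'(\tau)+(\beta+1)g''(\tau)\ln g'(\tau)\}$, $\tau=\ln\frac{\beta+1}{\lambda^*r^\theta}$. *)

From Stdlib Require Import Reals.
From Coquelicot Require Import Coquelicot.
Open Scope R_scope.

(* x^b for x >= 0, with the conventions 0^b = 0 (b <> 0) and 0^0 = 1.
   (Stdlib's Rpower is only meaningful for x > 0.) *)
Definition rpow (x b : R) : R :=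
  if Rlt_dec 0 x then Rpower x b else if Req_EM_T b 0 then 1 else 0.

(* f in C^4([0,oo)) with f' > 0 on [0,oo): f is the restriction to [0,oo)
   of a C^4 function h on R (one-sided derivatives at 0 are those of h). *)
Definition C4_pos_deriv_nonneg (f : R -> R) : Prop :=
  exists h : R -> R,
    (forall x, 0 <= x -> h x = f x) /\
    (forall x, forall k : nat, (k <= 4)%nat -> ex_derive_n h k x) /\
    (forall x, continuous (Derive_n h 4) x) /\
    (forall x, 0 <= x -> 0 < Derive h x).

Definition bigO_inf (e h : R -> R) : Prop :=
  exists C M : R, forall t, M < t -> Rabs (e t) <= C * Rabs (h t).

Definition littleo_t (h : R -> R) : Prop :=
  is_lim (fun t => h t / t) p_infty 0.

Definition flux (alpha beta : R) (u : R -> R) (s : R) : R :=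
  Rpower s alpha * rpow (Rabs (Derive u s)) beta * Derive u s.

Definition Lop (alpha beta gamma : R) (u : R -> R) (r : R) : R :=
  Rpower r (- gamma) * Derive (flux alpha beta u) r.

Definition calF (f : R -> R) (beta u : R) : R :=
  RInt_gen (fun s => exp (- f s / (beta + 1))) (at_point u) (Rbar_locally p_infty).

(* Hypotheses (A1)-(A6); g is the inverse of f. *)
Definition hypA (f g : R -> R) (alpha beta gamma : R) : Prop :=
  let g1 := Derive_n g 1 in
  let g2 := Derive_n g 2 in
  let g3 := Derive_n g 3 in
  let g4 := Derive_n g 4 in
  C4_pos_deriv_nonneg f /\ is_lim f p_infty p_infty /\
  is_lim g2 p_infty 0 /\
  (forall eps : R -> R, bigO_inf eps g2 ->
     is_lim (fun t => f (g t + eps t) / t) p_infty 1) /\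
  (forall h : R -> R, littleo_t h ->
     is_lim (fun t => g1 t / g1 (t + h t)) p_infty 1) /\
  is_lim (fun t => g2 t / g1 t * ln (g1 t)) p_infty 0 /\
  (forall n : nat, (n <= 2)%nat -> bigO_inf (fun t => g3 t * (ln (g1 t)) ^ n) g2) /\
  bigO_inf (fun t => g4 t * ln (g1 t)) g2 /\
  (exists C M : R, forall t s, M < t -> t <= s -> Rabs (g2 s) <= C * Rabs (g2 t)) /\
  (forall h : R -> R, littleo_t h -> bigO_inf (fun t => g2 (t + h t)) g2) /\
  alpha > beta + 1 /\ beta >= 0 /\ gamma + 2 + beta - alpha > 0.

Definition thm11_solution (f g : R -> R) (alpha beta gamma lam : R) (u : R -> R) : Prop :=
  let theta := gamma + 2 + beta - alpha in
  0 < lam /\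
  (* u in C^2((0,1]) *)
  (forall r, 0 < r < 1 -> ex_derive_n u 2 r /\ continuous (Derive_n u 2) r) /\
  filterlim u (at_left 1) (locally (u 1)) /\
  (exists d1, filterlim (Derive u) (at_left 1) (locally d1)) /\
  (exists d2, filterlim (Derive_n u 2) (at_left 1) (locally d2)) /\
  (* u takes values in the domain [0,oo) of f *)
  (forall r, 0 < r <= 1 -> 0 <= u r) /\
  (forall r, 0 < r < 1 ->
     ex_derive (flux alpha beta u) r /\
     Lop alpha beta gamma u r + lam * exp (f (u r)) = 0) /\
  u 1 = 0 /\
  filterlim u (at_right 0) (Rbar_locally p_infty) /\
  (exists C : R, exists eta : R, 0 < eta /\ forall r, 0 < r < eta ->
     let tau := ln ((beta + 1) / (lam * Rpower r theta)) in
     let Z := ln (Rpower theta (beta + 1) * (alpha - beta - 1)) - ln lam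
              - theta * ln r
              + (beta + 1) * ln (Derive_n g 1 tau
                                 + (beta + 1) * Derive_n g 2 tau * ln (Derive_n g 1 tau)) in
     Rabs (u r - g Z) <= C * Rabs (Derive_n g 2 (ln (Rpower r (- theta))))).

From Stdlib Require Import Reals Lra Lia Ranalysis5.
From Coquelicot Require Import Coquelicot.
Open Scope R_scope.

(* Write b = beta + 1 and let h be a C^1 extension of f to R with h' > 0 on
   [0, +oo), so that g inverts h there.
   (1) calF(g T) ~ model(T) := b e^{-T/b} g'(T) as T -> +oo.  Indeed, with
       Phi_c(T) = prim(g T) + c model(T), where prim is a primitive of e^{-h/b}, one
       has Phi_c' = e^{-T/b} ((1 - c) g' + c b g''); since g'' = o(g') (from (A2),
       (A4)), Phi_c is eventually monotone for every c <> 1.  This first shows that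
       prim has a limit L (so calF = L - prim), then that L lies between
       Phi_{1-e}(T) and Phi_{1+e}(T), i.e. calF(g T) is model(T) up to a factor 1 +- e.
   (2) Put t = -theta ln r + ln lam.  Theorem 1.1 reads u(e^{-t/theta}) = g(Z t) +
       O(g''(t)) with Z t = c1 + t + b ln G(t + c2), G = g' + b g'' ln g'.  As
       ln g' and ln G are o(t), (A3) makes g' asymptotically equal at t, t + c2 and
       Z t; hence the error is o(g'(Z t)), h(u) - Z t -> 0, and by (1) and the slow
       variation of ln g', calF(u) ~ model(Z t) ~ b e^{-(c1 + t)/b}.
   (3) b e^{-(c1 + t)/b} = K r^{theta/b}, so delta := calF(u* r)/(K r^{theta/b}) - 1
       tends to 0 as r -> 0+.
   The file first collects facts on limits at +oo and monotonicity, then treats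
   primitives and inverse functions, then (1), (2), and finally the theorem. *)

Definition at_inf (P : R -> Prop) : Prop := exists M, forall t, M < t -> P t.

Lemma at_inf_and (P Q : R -> Prop) :
  at_inf P -> at_inf Q -> at_inf (fun t => P t /\ Q t).
Proof.
  intros [M1 H1] [M2 H2]; exists (Rmax M1 M2); intros t Ht.
  pose proof (Rmax_l M1 M2); pose proof (Rmax_r M1 M2).
  split; [apply H1 | apply H2]; lra.
Qed.

Lemma at_inf_impl (P Q : R -> Prop) :
  at_inf P -> (forall t, P t -> Q t) -> at_inf Q.
Proof. intros [M H] HPQ; exists M; auto. Qed.

Lemma at_inf_gt (a : R) : at_inf (fun t => a < t).
Proof. exists a; auto. Qed.

Lemma lim_eps (f : R -> R) (l : R) : is_lim f p_infty l <->
  forall eps, 0 < eps -> at_inf (fun t => Rabs (f t - l) < eps).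
Proof.
  rewrite <- is_lim_spec; split.
  - intros H eps He. exact (H (mkposreal eps He)).
  - intros H [eps He]. exact (H eps He).
Qed.

Lemma lim_pinf_eps (f : R -> R) : is_lim f p_infty p_infty <->
  forall A, at_inf (fun t => A < f t).
Proof. rewrite <- is_lim_spec; split; intros H A; exact (H A). Qed.

Lemma lim_ext_at_inf (f g : R -> R) (l : Rbar) :
  at_inf (fun t => f t = g t) -> is_lim f p_infty l -> is_lim g p_infty l.
Proof. intros H; apply is_lim_ext_loc; exact H. Qed.

Lemma lim_comp_inf (f a : R -> R) (l : R) :
  is_lim f p_infty l -> is_lim a p_infty p_infty -> is_lim (fun t => f (a t)) p_infty l.
Proof. intros Hf Ha; eapply is_lim_comp; eauto. exists 0; intros; discriminate. Qed.

Lemma lim_shift (f : R -> R) (l : R) (c : R) :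
  is_lim f p_infty l -> is_lim (fun t => f (t + c)) p_infty l.
Proof.
  intros H. apply (lim_comp_inf f (fun t => t + c)); auto.
  apply lim_pinf_eps. intros A. exists (A - c). intros; lra.
Qed.

Lemma lim_plus (f g : R -> R) (a b : R) :
  is_lim f p_infty a -> is_lim g p_infty b -> is_lim (fun t => f t + g t) p_infty (a + b).
Proof. intros H1 H2; eapply is_lim_plus; eauto. reflexivity. Qed.

Lemma lim_mult (f g : R -> R) (a b : R) :
  is_lim f p_infty a -> is_lim g p_infty b -> is_lim (fun t => f t * g t) p_infty (a * b).
Proof. intros H1 H2; apply (is_lim_mult f g p_infty a b H1 H2); exact I. Qed.

Lemma lim_scal (f : R -> R) (c a : R) :
  is_lim f p_infty a -> is_lim (fun t => c * f t) p_infty (c * a).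
Proof. intros H; apply lim_mult; [apply is_lim_const | exact H]. Qed.

Lemma lim_inv (f : R -> R) (a : R) :
  is_lim f p_infty a -> a <> 0 -> is_lim (fun t => / f t) p_infty (/ a).
Proof.
  intros H1 H2; apply (is_lim_inv f p_infty a H1).
  intro E; apply H2; injection E; auto.
Qed.

Lemma lim_inv_id : is_lim (fun t => / t) p_infty 0.
Proof. exact (is_lim_inv (fun t => t) p_infty p_infty (is_lim_id _) ltac:(discriminate)). Qed.

Lemma lim_exp (f : R -> R) (a : R) :
  is_lim f p_infty a -> is_lim (fun t => exp (f t)) p_infty (exp a).
Proof. intros H; apply (is_lim_comp_continuous f exp p_infty a H), continuous_exp. Qed.

Lemma lim_ln (f : R -> R) (l : R) :
  is_lim f p_infty l -> 0 < l -> is_lim (fun t => ln (f t)) p_infty (ln l).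
Proof. intros H Hl. apply (is_lim_comp_continuous f ln p_infty l H), continuous_ln; auto. Qed.

Lemma lim_abs0 (f : R -> R) : is_lim f p_infty 0 -> is_lim (fun t => Rabs (f t)) p_infty 0.
Proof.
  intros H. apply (proj2 (lim_eps _ 0)); intros eps He.
  apply (at_inf_impl _ _ (proj1 (lim_eps _ 0) H eps He)). intros t Ht.
  rewrite Rminus_0_r in *. rewrite Rabs_Rabsolu. auto.
Qed.

Lemma lim_dom0 (f g : R -> R) :
  at_inf (fun t => Rabs (f t) <= g t) -> is_lim g p_infty 0 -> is_lim f p_infty 0.
Proof.
  intros Hd Hg; apply (proj2 (lim_eps f 0)); intros eps He.
  apply (at_inf_impl _ _ (at_inf_and _ _ Hd (proj1 (lim_eps g 0) Hg eps He))).
  intros t [H1 H2]. rewrite Rminus_0_r in *. pose proof (Rle_abs (g t)). lra.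
Qed.

Lemma lim_pinf_ge (f g : R -> R) :
  at_inf (fun t => g t <= f t) -> is_lim g p_infty p_infty -> is_lim f p_infty p_infty.
Proof.
  intros [M HM] Hp. apply lim_pinf_eps. intros A.
  destruct (proj1 (lim_pinf_eps g) Hp A) as [N HN]. exists (Rmax M N). intros t Ht.
  pose proof (Rmax_l M N); pose proof (Rmax_r M N).
  specialize (HM t ltac:(lra)). specialize (HN t ltac:(lra)). lra.
Qed.

Lemma lim_pinf_close (a1 a2 : R -> R) :
  is_lim a2 p_infty p_infty -> is_lim (fun t => a1 t - a2 t) p_infty 0 ->
  is_lim a1 p_infty p_infty.
Proof.
  intros H2 H12. apply (is_lim_ext (fun t => (a1 t - a2 t) + a2 t)); [intros; ring|].
  eapply is_lim_plus; eauto. reflexivity.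
Qed.

Lemma nondecr_of_deriv (k dk : R -> R) (T0 : R)
  (Hd : forall x, T0 < x -> is_derive k x (dk x))
  (Hs : forall x, T0 < x -> 0 <= dk x) :
  forall x y, T0 < x -> x <= y -> k x <= k y.
Proof.
  intros x y Hx Hxy. destruct (Req_dec x y) as [->|Hne]; [lra|].
  destruct (MVT_cor2 k dk x y) as [c [Hc Hcr]]; [lra| |].
  { intros c Hc. apply is_derive_Reals, Hd; lra. }
  assert (0 <= dk c * (y - x)) by (apply Rmult_le_pos; [apply Hs; lra| lra]). lra.
Qed.

Lemma nonincr_of_deriv (k dk : R -> R) (T0 : R)
  (Hd : forall x, T0 < x -> is_derive k x (dk x))
  (Hs : forall x, T0 < x -> dk x <= 0) :
  forall x y, T0 < x -> x <= y -> k y <= k x.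
Proof.
  intros x y Hx Hxy.
  enough (- k x <= - k y) by lra.
  apply (nondecr_of_deriv (fun x => - k x) (fun x => - dk x) T0); auto.
  - intros z Hz. apply (is_derive_opp k z (dk z)). auto.
  - intros z Hz. specialize (Hs z Hz). lra.
Qed.

Lemma le_lim_of_nondecr (k : R -> R) (l T0 : R)
  (Hk : forall x y, T0 < x -> x <= y -> k x <= k y) (Hl : is_lim k p_infty l) :
  forall x, T0 < x -> k x <= l.
Proof.
  intros x Hx. destruct (Rle_lt_dec (k x) l) as [|Hlt]; [auto|exfalso].
  destruct (proj1 (lim_eps k l) Hl (k x - l) ltac:(lra)) as [M HM].
  set (s := Rmax M x + 1).
  assert (M < s /\ x <= s) by (unfold s; pose proof (Rmax_l M x); pose proof (Rmax_r M x); lra).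
  specialize (HM s (proj1 H)). pose proof (Hk x s Hx (proj2 H)).
  pose proof (Rle_abs (k s - l)). lra.
Qed.

Lemma ge_lim_of_nonincr (k : R -> R) (l T0 : R)
  (Hk : forall x y, T0 < x -> x <= y -> k y <= k x) (Hl : is_lim k p_infty l) :
  forall x, T0 < x -> l <= k x.
Proof.
  intros x Hx.
  enough (- k x <= - l) by lra.
  apply (le_lim_of_nondecr (fun x => - k x) (- l) T0); auto.
  - intros y z Hy Hyz. specialize (Hk y z Hy Hyz). lra.
  - apply (is_lim_opp k p_infty l Hl).
Qed.

(* ln k is "slowly varying": eventually eps-Lipschitz for every eps > 0.  This is
   how the smallness of g''/g' will be used. *)
Definition slowly_varying_log (k : R -> R) : Prop :=
  forall eps, 0 < eps -> exists M, forall s1 s2, M < s1 -> M < s2 ->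
    Rabs (ln (k s1) - ln (k s2)) <= eps * Rabs (s1 - s2).

(* If k2 -> 0 and (k2/k1) ln k1 -> 0 then k2/k1 -> 0: where |ln k1| < 1 the
   quotient is bounded by e |k2|. *)
Lemma quotient_lim0 (k1 k2 : R -> R) (a : R)
  (Hpos : forall x, a < x -> 0 < k1 x)
  (Hk2 : is_lim k2 p_infty 0)
  (Hq : is_lim (fun t => k2 t / k1 t * ln (k1 t)) p_infty 0) :
  is_lim (fun t => k2 t / k1 t) p_infty 0.
Proof.
  apply (proj2 (lim_eps _ 0)); intros eps He.
  assert (He2 : 0 < eps * exp (-1)) by (apply Rmult_lt_0_compat; [lra| apply exp_pos]).
  pose proof (proj1 (lim_eps _ 0) Hk2 _ He2) as E1.
  pose proof (proj1 (lim_eps _ 0) Hq _ He) as E2.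
  apply (at_inf_impl _ _ (at_inf_and _ _ (at_inf_gt a) (at_inf_and _ _ E1 E2))).
  intros t [Ht [H1 H2]]. rewrite Rminus_0_r in *.
  specialize (Hpos t Ht).
  destruct (Rle_lt_dec 1 (Rabs (ln (k1 t)))) as [Hl|Hl].
  - rewrite Rabs_mult in H2.
    assert (Rabs (k2 t / k1 t) <= Rabs (k2 t / k1 t) * Rabs (ln (k1 t))).
    { pose proof (Rabs_pos (k2 t / k1 t)). nra. }
    lra.
  - assert (Hk1 : exp (-1) < k1 t).
    { rewrite <- (exp_ln (k1 t)) by lra. apply exp_increasing.
      pose proof (Rle_abs (- ln (k1 t))). rewrite Rabs_Ropp in H. lra. }
    unfold Rdiv; rewrite Rabs_mult, Rabs_inv, (Rabs_pos_eq (k1 t)) by lra.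
    apply (Rmult_lt_reg_r (k1 t)); [lra|].
    rewrite Rmult_assoc, Rinv_l, Rmult_1_r by lra.
    pose proof (exp_pos (-1)).
    assert (eps * exp (-1) < eps * k1 t) by (apply Rmult_lt_compat_l; lra).
    lra.
Qed.

Lemma slowly_varying_of_log_deriv (k dk : R -> R) (a : R)
  (Hd : forall x, a < x -> is_derive k x (dk x))
  (Hpos : forall x, a < x -> 0 < k x)
  (Hq : is_lim (fun t => dk t / k t) p_infty 0) :
  slowly_varying_log k.
Proof.
  intros eps He.
  destruct (proj1 (lim_eps _ 0) Hq _ He) as [M1 HM1].
  exists (Rmax M1 a). intros s1 s2 H1 H2.
  pose proof (Rmax_l M1 a); pose proof (Rmax_r M1 a).
  assert (Hbetween : forall c, Rmin s2 s1 <= c <= Rmax s2 s1 -> M1 < c /\ a < c).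
  { intros c Hc. destruct (Rle_dec s2 s1).
    - rewrite Rmin_left in Hc by lra. lra.
    - rewrite Rmin_right in Hc by lra. lra. }
  destruct (MVT_abs (fun x => ln (k x)) (fun x => dk x / k x) s2 s1) as [c [Hc Hcr]].
  { intros c Hc. apply is_derive_Reals. destruct (Hbetween c Hc) as [_ Hca].
    pose proof (Hpos c Hca).
    replace (dk c / k c) with (scal (dk c) (/ k c)) by reflexivity.
    apply (is_derive_comp ln k c); [apply is_derive_Reals, derivable_pt_lim_ln; lra | auto]. }
  rewrite Hc. destruct (Hbetween c Hcr) as [Hc1 _].
  specialize (HM1 c Hc1). rewrite Rminus_0_r in HM1.
  apply Rmult_le_compat_r; [apply Rabs_pos| lra].
Qed.

Lemma log_little_o (k : R -> R) (Hk : slowly_varying_log k) :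
  is_lim (fun t => ln (k t) / t) p_infty 0.
Proof.
  apply (proj2 (lim_eps _ 0)); intros eps He.
  destruct (Hk (eps/2)) as [M HM]; [lra|].
  set (t1 := Rmax M 0 + 1).
  assert (Ht1 : M < t1 /\ 0 < t1)
    by (unfold t1; pose proof (Rmax_l M 0); pose proof (Rmax_r M 0); lra).
  set (N := Rmax t1 (4 * Rabs (ln (k t1)) / eps + 1)).
  exists N. intros t Ht.
  pose proof (Rmax_l t1 (4 * Rabs (ln (k t1)) / eps + 1)).
  pose proof (Rmax_r t1 (4 * Rabs (ln (k t1)) / eps + 1)). fold N in H, H0.
  specialize (HM t t1 ltac:(lra) (proj1 Ht1)).
  rewrite Rminus_0_r. unfold Rdiv. rewrite Rabs_mult, Rabs_inv, (Rabs_pos_eq t) by lra.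
  rewrite (Rabs_pos_eq (t - t1)) in HM by lra.
  apply (Rmult_lt_reg_r t); [lra|].
  rewrite Rmult_assoc, Rinv_l, Rmult_1_r by lra.
  pose proof (Rabs_triang (ln (k t) - ln (k t1)) (ln (k t1))) as Htri.
  replace (ln (k t) - ln (k t1) + ln (k t1)) with (ln (k t)) in Htri by ring.
  assert (4 * Rabs (ln (k t1)) < eps * t).
  { assert (4 * Rabs (ln (k t1)) / eps < t) by lra.
    apply (Rmult_lt_compat_r eps) in H1; [|lra]. unfold Rdiv in H1.
    rewrite Rmult_assoc, Rinv_l, Rmult_1_r in H1 by lra. lra. }
  pose proof (Rabs_pos (ln (k t1))).
  nra.
Qed.

Lemma ratio_lim1 (k : R -> R) (Hpos : at_inf (fun x => 0 < k x))
  (Hk : slowly_varying_log k) (a1 a2 : R -> R) :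
  is_lim a2 p_infty p_infty -> is_lim (fun t => a1 t - a2 t) p_infty 0 ->
  is_lim (fun t => k (a1 t) / k (a2 t)) p_infty 1.
Proof.
  intros H2 H12. pose proof (lim_pinf_close a1 a2 H2 H12) as H1.
  assert (HD : is_lim (fun t => ln (k (a1 t)) - ln (k (a2 t))) p_infty 0).
  { apply (proj2 (lim_eps _ 0)); intros eps He.
    destruct (Hk 1 Rlt_0_1) as [M HM].
    pose proof (proj1 (lim_eps _ 0) H12 _ He) as E.
    pose proof (proj1 (lim_pinf_eps a1) H1 M) as E1.
    pose proof (proj1 (lim_pinf_eps a2) H2 M) as E2.
    apply (at_inf_impl _ _ (at_inf_and _ _ E (at_inf_and _ _ E1 E2))).
    intros t [Ht [Ht1 Ht2]]. rewrite Rminus_0_r in *.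
    specialize (HM _ _ Ht1 Ht2). lra. }
  destruct Hpos as [P HP].
  destruct (proj1 (lim_pinf_eps a1) H1 P) as [N1 HN1].
  destruct (proj1 (lim_pinf_eps a2) H2 P) as [N2 HN2].
  pose proof (lim_exp _ _ HD) as HE. rewrite exp_0 in HE.
  apply (lim_ext_at_inf (fun t => exp (ln (k (a1 t)) - ln (k (a2 t))))); [|exact HE].
  exists (Rmax N1 N2). intros t Ht.
  pose proof (Rmax_l N1 N2); pose proof (Rmax_r N1 N2).
  pose proof (HP _ (HN1 t ltac:(lra))). pose proof (HP _ (HN2 t ltac:(lra))).
  unfold Rminus; rewrite exp_plus, exp_Ropp, !exp_ln by lra. reflexivity.
Qed.

(* The integrand of calF, continued to all of R through an extension h of f,
   and its primitive from 0. *)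
Definition weight (h : R -> R) (beta s : R) : R := exp (- h s / (beta + 1)).
Definition prim (h : R -> R) (beta y : R) : R := RInt (weight h beta) 0 y.

Section Primitive.
Variables (h : R -> R) (beta : R).
Hypothesis h_deriv : forall x, ex_derive h x.

Lemma weight_continuous (s : R) : continuous (weight h beta) s.
Proof. apply (ex_derive_continuous (weight h beta)). unfold weight. auto_derive. auto. Qed.

Lemma weight_ex_RInt (a b : R) : ex_RInt (weight h beta) a b.
Proof. apply (@ex_RInt_continuous R_CompleteNormedModule); intros; apply weight_continuous. Qed.

Lemma prim_deriv (y : R) : is_derive (prim h beta) y (weight h beta y).
Proof.
  apply (is_derive_RInt _ _ 0); [|apply weight_continuous].
  exists (mkposreal 1 Rlt_0_1). intros.
  apply (@RInt_correct R_CompleteNormedModule), weight_ex_RInt.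
Qed.

Lemma prim_chasles (x y : R) : RInt (weight h beta) x y = prim h beta y - prim h beta x.
Proof.
  unfold prim. rewrite <- (RInt_Chasles (weight h beta) 0 x y) by apply weight_ex_RInt.
  change (plus ?a ?b) with (Rplus a b). lra.
Qed.

Lemma calF_value (f : R -> R) (L : R)
  (Hfh : forall x, 0 <= x -> h x = f x) (HL : is_lim (prim h beta) p_infty L) :
  forall x, 0 <= x -> calF f beta x = L - prim h beta x.
Proof.
  intros x Hx. unfold calF. apply is_RInt_gen_unique.
  intros P [eps HP].
  destruct (proj1 (lim_eps _ L) HL eps (cond_pos eps)) as [M HM].
  apply (Filter_prod _ _ _ (fun a => a = x) (fun b => Rmax M x < b)).
  - reflexivity.
  - exists (Rmax M x). auto.
  - intros a b -> Hb. pose proof (Rmax_l M x); pose proof (Rmax_r M x).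
    exists (RInt (weight h beta) x b). split.
    + apply (is_RInt_ext (weight h beta)).
      * intros z Hz. simpl in Hz. rewrite Rmin_left in Hz by lra.
        unfold weight. rewrite Hfh; lra.
      * apply (@RInt_correct R_CompleteNormedModule), weight_ex_RInt.
    + apply HP. rewrite prim_chasles. specialize (HM b ltac:(lra)).
      change (Rabs ((prim h beta b - prim h beta x) - (L - prim h beta x)) < eps).
      replace ((prim h beta b - prim h beta x) - (L - prim h beta x)) with (prim h beta b - L)
        by ring.
      exact HM.
Qed.

End Primitive.

Section InverseFunction.
Variables f h g : R -> R.
Hypothesis h_deriv : forall x, ex_derive h x.
Hypothesis h_deriv_pos : forall x, 0 <= x -> 0 < Derive h x.
Hypothesis h_ext : forall x, 0 <= x -> h x = f x.
Hypothesis g_inv : forall t, f 0 <= t -> 0 <= g t /\ f (g t) = t.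

Lemma h_incr : forall x y, 0 <= x -> x < y -> h x < h y.
Proof.
  intros x y Hx Hxy.
  destruct (MVT_cor2 h (Derive h) x y Hxy) as [c [Hc Hcr]].
  { intros c Hc. apply is_derive_Reals, Derive_correct, h_deriv. }
  assert (0 < Derive h c * (y - x)) by (apply Rmult_lt_0_compat; [apply h_deriv_pos; lra|lra]).
  lra.
Qed.

Lemma h_of_g (T : R) : f 0 <= T -> h (g T) = T.
Proof. intros HT. destruct (g_inv T HT). rewrite h_ext; auto. Qed.

Lemma g_of_h (y : R) : 0 <= y -> g (h y) = y.
Proof.
  intros Hy.
  assert (H0 : f 0 <= h y).
  { rewrite <- (h_ext 0) by lra. destruct (Req_dec y 0) as [->|]; [lra|].
    left; apply h_incr; lra. }
  destruct (g_inv _ H0) as [Hp He]. rewrite <- h_ext in He by auto.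
  destruct (Rtotal_order (g (h y)) y) as [Hl|[Hl|Hl]]; auto.
  - pose proof (h_incr _ _ Hp Hl). lra.
  - pose proof (h_incr _ _ Hy Hl). lra.
Qed.

Lemma g_mono (y z : R) : f 0 <= y -> y <= z -> g y <= g z.
Proof.
  intros Hy Hyz. destruct (Rle_lt_dec (g y) (g z)) as [|Hl]; auto.
  pose proof (h_incr _ _ (proj1 (g_inv z ltac:(lra))) Hl).
  rewrite !h_of_g in H by lra. lra.
Qed.

Lemma g_to_inf : is_lim g p_infty p_infty.
Proof.
  apply lim_pinf_eps. intros A.
  set (y := Rmax A 0 + 1).
  assert (Hy : A < y /\ 0 < y)
    by (unfold y; pose proof (Rmax_l A 0); pose proof (Rmax_r A 0); lra).
  exists (Rmax (h y) (f 0)). intros T HT.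
  pose proof (Rmax_l (h y) (f 0)); pose proof (Rmax_r (h y) (f 0)).
  destruct (g_inv T ltac:(lra)) as [Hp He].
  destruct (Rlt_le_dec (g T) y) as [Hl|Hl]; [|lra].
  pose proof (h_incr _ _ Hp Hl). rewrite h_ext in H1 by auto. lra.
Qed.

Lemma g_continuous (x : R) : f 0 < x -> continuity_pt g x.
Proof.
  intros Hx. set (ub := g (x + 1)).
  assert (Hub : 0 < ub).
  { destruct (g_inv (x + 1) ltac:(lra)) as [[H1|H1] H2]; auto.
    unfold ub in *; rewrite <- H1 in H2. lra. }
  apply (continuity_pt_recip_interv h g 0 ub Hub).
  - intros y z Hy Hyz Hz. apply h_incr; lra.
  - intros y Hy1 Hy2. unfold comp, id. apply h_of_g. rewrite h_ext in Hy1 by lra. lra.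
  - intros y Hy1 Hy2. rewrite h_ext in Hy1 by lra. unfold ub in Hy2.
    rewrite h_of_g in Hy2 by lra. split; [apply g_inv; lra | apply g_mono; lra].
  - intros a _. apply continuity_pt_filterlim, (ex_derive_continuous h), h_deriv.
  - rewrite h_ext by lra. unfold ub. rewrite h_of_g by lra. lra.
Qed.

Lemma g_is_derive (x : R) : f 0 < x -> is_derive g x (/ Derive h (g x)).
Proof.
  intros Hx.
  assert (Hhd : forall a, derivable_pt h a) by (intros; apply ex_derive_Reals_0, h_deriv).
  assert (Hgi : g (f 0) <= g x <= g (x + 1)) by (split; apply g_mono; lra).
  pose proof (derivable_pt_lim_recip_interv h g (f 0) (x + 1) x (fun a _ => Hhd a)
    (g_continuous x Hx) ltac:(lra) ltac:(lra) Hgi) as HD.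
  assert (HD2 : derive_pt h (g x) (Hhd (g x)) <> 0 ->
            derivable_pt_lim g x (1 / derive_pt h (g x) (Hhd (g x)))).
  { apply HD. intros y Hy. unfold comp, id. apply h_of_g. lra. }
  rewrite Derive_Reals in HD2.
  apply is_derive_Reals. replace (/ Derive h (g x)) with (1 / Derive h (g x)) by (unfold Rdiv; ring).
  apply HD2. assert (0 < Derive h (g x)) by (apply h_deriv_pos, g_inv; lra). lra.
Qed.

End InverseFunction.

(* The facts about f, an extension h of f to R, and its inverse g on which the
   asymptotic analysis rests; they follow from (A1), (A2), (A4). *)
Record inverse_data (f h g : R -> R) : Prop := {
  ext_deriv : forall x, ex_derive h x;
  ext_deriv_pos : forall x, 0 <= x -> 0 < Derive h x;
  ext_agrees : forall x, 0 <= x -> h x = f x;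
  inv_spec : forall t, f 0 <= t -> 0 <= g t /\ f (g t) = t;
  g_deriv1 : forall x, f 0 < x -> is_derive g x (Derive g x);
  g_deriv2 : forall x, f 0 < x -> is_derive (Derive g) x (Derive_n g 2 x);
  g'_pos : forall x, f 0 < x -> 0 < Derive g x;
  g''_ratio : is_lim (fun t => Derive_n g 2 t / Derive g t) p_infty 0 }.

Arguments ext_deriv {f h g}. Arguments ext_deriv_pos {f h g}. Arguments ext_agrees {f h g}.
Arguments inv_spec {f h g}. Arguments g_deriv1 {f h g}. Arguments g_deriv2 {f h g}.
Arguments g'_pos {f h g}. Arguments g''_ratio {f h g}.

Lemma inverse_data_of_hypA (f g : R -> R) (alpha beta gamma : R)
  (Hg : forall t, f 0 <= t -> 0 <= g t /\ f (g t) = t)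
  (HA : hypA f g alpha beta gamma) : exists h, inverse_data f h g.
Proof.
  destruct HA as ([h (Hfh & Hder & _ & Hp)] & _ & HA2 & _ & _ & HA4 & _).
  assert (Hh : forall x, ex_derive h x) by (intros x; exact (Hder x 1%nat ltac:(lia))).
  assert (Hh2 : forall x, ex_derive (Derive h) x) by (intros x; exact (Hder x 2%nat ltac:(lia))).
  pose proof (g_is_derive f h g Hh Hp Hfh Hg) as Hdg.
  assert (Hg' : forall x, f 0 < x -> Derive g x = / Derive h (g x))
    by (intros; apply is_derive_unique, Hdg; auto).
  assert (Hpos : forall x, f 0 < x -> 0 < Derive g x).
  { intros x Hx. rewrite Hg' by auto. apply Rinv_0_lt_compat, Hp, Hg; lra. }
  assert (Hd1 : forall x, f 0 < x -> is_derive g x (Derive g x))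
    by (intros; rewrite Hg' by auto; apply Hdg; auto).
  assert (Hd2 : forall x, f 0 < x -> is_derive (Derive g) x (Derive_n g 2 x)).
  { intros x Hx. apply Derive_correct.
    apply (ex_derive_ext_loc (fun y => / Derive h (g y))).
    - assert (He : 0 < x - f 0) by lra. exists (mkposreal _ He). intros y Hy.
      change (Rabs (y - x) < x - f 0) in Hy. pose proof (Rle_abs (x - y)).
      rewrite Rabs_minus_sym in Hy. rewrite Hg'; auto. lra.
    - assert (0 < Derive h (g x)) by (apply Hp, Hg; lra).
      apply ex_derive_inv; [|lra]. apply (ex_derive_comp (Derive h) g); [apply Hh2|].
      exists (/ Derive h (g x)); apply Hdg; auto. }
  exists h. split; auto.
  apply (quotient_lim0 (Derive g) (Derive_n g 2) (f 0)); auto.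
Qed.

(* Model of calF at g T:  (beta+1) e^{-T/(beta+1)} g'(T), the value obtained by
   freezing g' in calF(g T) = int_T^oo e^{-s/(beta+1)} g'(s) ds. *)
Definition model (g : R -> R) (beta T : R) : R :=
  (beta + 1) * exp (- T / (beta + 1)) * Derive g T.

(* The combination prim(g T) + c model(T), whose monotonicity for c near 1
   sandwiches calF(g T) between multiples of model(T), and its derivative. *)
Definition Phi (h g : R -> R) (beta c T : R) : R := prim h beta (g T) + c * model g beta T.

Definition Phi_rate (g : R -> R) (beta c T : R) : R :=
  exp (- T / (beta + 1)) * ((1 - c) * Derive g T + c * (beta + 1) * Derive_n g 2 T).

Lemma exp_decay_lim (c : R) : 0 < c -> is_lim (fun T => exp (- T / c)) p_infty 0.
Proof.
  intros Hc. apply (proj2 (lim_eps _ 0)). intros eps He.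
  exists (- c * ln eps). intros T HT. rewrite Rminus_0_r, Rabs_pos_eq by (left; apply exp_pos).
  rewrite <- (exp_ln eps) by auto. apply exp_increasing.
  apply (Rmult_lt_reg_r c); auto. unfold Rdiv. rewrite Rmult_assoc, Rinv_l by lra. lra.
Qed.

Section ModelComparison.
Variables f h g : R -> R.
Variable beta : R.
Hypothesis H : inverse_data f h g.
Hypothesis beta_nonneg : 0 <= beta.

Lemma g'_slowly_varying : slowly_varying_log (Derive g).
Proof. exact (slowly_varying_of_log_deriv _ _ (f 0) (g_deriv2 H) (g'_pos H) (g''_ratio H)). Qed.

Lemma model_pos (T : R) : f 0 < T -> 0 < model g beta T.
Proof.
  intros HT. unfold model. pose proof (g'_pos H T HT). pose proof (exp_pos (- T / (beta + 1))).
  apply Rmult_lt_0_compat; auto. apply Rmult_lt_0_compat; auto; lra.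
Qed.

(* model(T) <= (beta+1) e^{-T/(2(beta+1))} eventually, since ln g'(T) = o(T). *)
Lemma model_lim0 : is_lim (model g beta) p_infty 0.
Proof.
  pose proof (log_little_o _ g'_slowly_varying) as Hlno.
  apply (lim_dom0 _ (fun T => (beta + 1) * exp (- T / (2 * (beta + 1))))).
  - assert (Hc : 0 < / (2 * (beta + 1))) by (apply Rinv_0_lt_compat; lra).
    pose proof (proj1 (lim_eps _ 0) Hlno _ Hc) as E.
    apply (at_inf_impl _ _ (at_inf_and _ _ E (at_inf_gt (Rmax (f 0) 0)))).
    intros T [H1 H2]. pose proof (Rmax_l (f 0) 0); pose proof (Rmax_r (f 0) 0).
    pose proof (g'_pos H T ltac:(lra)) as Hg'.
    rewrite Rabs_pos_eq by (left; apply model_pos; lra).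
    rewrite Rminus_0_r in H1. pose proof (Rle_abs (ln (Derive g T) / T)).
    assert (Hl : ln (Derive g T) < T / (2 * (beta + 1))).
    { apply (Rmult_lt_reg_r (/ T)); [apply Rinv_0_lt_compat; lra|].
      unfold Rdiv in *. rewrite (Rmult_comm T), Rmult_assoc, Rinv_r, Rmult_1_r by lra. lra. }
    unfold model. rewrite Rmult_assoc. apply Rmult_le_compat_l; [lra|].
    rewrite <- (exp_ln (Derive g T)) by lra. rewrite <- exp_plus.
    left; apply exp_increasing. unfold Rdiv in *.
    replace (- T * / (2 * (beta + 1))) with (- T * / (beta + 1) + T * / (2 * (beta + 1)))
      by (field; lra).
    lra.
  - replace (Finite 0) with (Finite ((beta + 1) * 0)) by (f_equal; ring).
    apply lim_scal, exp_decay_lim. lra.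
Qed.

(* Derivatives of prim(g T) = int^{g T} e^{-h/(beta+1)} (note h (g T) = T) and of model. *)
Lemma prim_g_deriv (T : R) : f 0 < T ->
  is_derive (fun T => prim h beta (g T)) T (exp (- T / (beta + 1)) * Derive g T).
Proof.
  intros HT.
  replace (exp (- T / (beta + 1)) * Derive g T) with (scal (Derive g T) (weight h beta (g T))).
  - apply (is_derive_comp (prim h beta) g); [apply prim_deriv, (ext_deriv H) | apply (g_deriv1 H); auto].
  - unfold weight. rewrite (h_of_g f h g (ext_agrees H) (inv_spec H)) by lra.
    apply Rmult_comm.
Qed.

Lemma model_deriv (T : R) : f 0 < T ->
  is_derive (model g beta) T
    (exp (- T / (beta + 1)) * (- Derive g T + (beta + 1) * Derive_n g 2 T)).
Proof.
  intros HT. unfold model.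
  assert (HE : is_derive (fun T => (beta + 1) * exp (- T / (beta + 1))) T
                 (- exp (- T / (beta + 1)))).
  { auto_derive; [exact I|]. unfold Rdiv. field. lra. }
  pose proof (is_derive_mult _ _ T _ _ HE (g_deriv2 H T HT) ltac:(intros; apply Rmult_comm)) as HM.
  change mult with Rmult in HM. change plus with Rplus in HM.
  replace (exp (- T / (beta + 1)) * (- Derive g T + (beta + 1) * Derive_n g 2 T))
    with (- exp (- T / (beta + 1)) * Derive g T
          + (beta + 1) * exp (- T / (beta + 1)) * Derive_n g 2 T) by ring.
  exact HM.
Qed.

Lemma Phi_deriv (c T : R) : f 0 < T -> is_derive (Phi h g beta c) T (Phi_rate g beta c T).
Proof.
  intros HT.
  pose proof (is_derive_plus (fun T => prim h beta (g T)) (fun T => c * model g beta T) T _ _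
                (prim_g_deriv T HT) (is_derive_scal _ T c _ (model_deriv T HT))) as HD.
  change plus with Rplus in HD.
  replace (Phi_rate g beta c T) with
    (exp (- T / (beta + 1)) * Derive g T
     + c * (exp (- T / (beta + 1)) * (- Derive g T + (beta + 1) * Derive_n g 2 T)))
    by (unfold Phi_rate; ring).
  exact HD.
Qed.

Lemma g''_small (d : R) : 0 < d ->
  at_inf (fun T => f 0 < T /\ Rabs (Derive_n g 2 T) < d * Derive g T).
Proof.
  intros Hd.
  apply (at_inf_impl _ _ (at_inf_and _ _ (proj1 (lim_eps _ 0) (g''_ratio H) d Hd) (at_inf_gt (f 0)))).
  intros T [H1 H2]. split; auto. pose proof (g'_pos H T H2).
  rewrite Rminus_0_r in H1. unfold Rdiv in H1.
  rewrite Rabs_mult, Rabs_inv, (Rabs_pos_eq (Derive g T)) in H1 by lra.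
  apply (Rmult_lt_compat_r (Derive g T)) in H1; auto.
  rewrite Rmult_assoc, Rinv_l, Rmult_1_r in H1 by lra. exact H1.
Qed.

(* Since g'' = o(g'), the sign of Phi_rate c is eventually that of 1 - c. *)
Lemma Phi_rate_nonpos (c : R) : 1 < c -> at_inf (fun T => f 0 < T /\ Phi_rate g beta c T <= 0).
Proof.
  intros Hc.
  assert (Hd : 0 < (c - 1) / (c * (beta + 1)))
    by (apply Rdiv_lt_0_compat; [lra | apply Rmult_lt_0_compat; lra]).
  apply (at_inf_impl _ _ (g''_small _ Hd)). intros T [HT Hq]. split; auto.
  pose proof (g'_pos H T HT). pose proof (exp_pos (- T / (beta + 1))).
  pose proof (Rle_abs (Derive_n g 2 T)).
  assert (c * (beta + 1) * Rabs (Derive_n g 2 T) <= (c - 1) * Derive g T).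
  { apply (Rmult_lt_compat_l (c * (beta + 1))) in Hq; [|apply Rmult_lt_0_compat; lra].
    replace (c * (beta + 1) * ((c - 1) / (c * (beta + 1)) * Derive g T))
      with ((c - 1) * Derive g T) in Hq by (field; lra). lra. }
  unfold Phi_rate. assert (c * (beta + 1) * Derive_n g 2 T <= c * (beta + 1) * Rabs (Derive_n g 2 T))
    by (apply Rmult_le_compat_l; nra).
  nra.
Qed.

Lemma Phi_rate_nonneg (c : R) : c < 1 -> at_inf (fun T => f 0 < T /\ 0 <= Phi_rate g beta c T).
Proof.
  intros Hc. pose proof (Rabs_pos c) as Hac.
  assert (Hd : 0 < (1 - c) / ((Rabs c + 1) * (beta + 1)))
    by (apply Rdiv_lt_0_compat; [lra | apply Rmult_lt_0_compat; lra]).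
  apply (at_inf_impl _ _ (g''_small _ Hd)). intros T [HT Hq]. split; auto.
  pose proof (g'_pos H T HT). pose proof (exp_pos (- T / (beta + 1))).
  assert ((Rabs c + 1) * (beta + 1) * Rabs (Derive_n g 2 T) <= (1 - c) * Derive g T).
  { apply (Rmult_lt_compat_l ((Rabs c + 1) * (beta + 1))) in Hq; [|apply Rmult_lt_0_compat; lra].
    replace ((Rabs c + 1) * (beta + 1) * ((1 - c) / ((Rabs c + 1) * (beta + 1)) * Derive g T))
      with ((1 - c) * Derive g T) in Hq by (field; lra). lra. }
  assert (- (c * (beta + 1) * Derive_n g 2 T) <= Rabs c * (beta + 1) * Rabs (Derive_n g 2 T)).
  { pose proof (Rle_abs (- (c * (beta + 1) * Derive_n g 2 T))) as Hle.
    rewrite Rabs_Ropp, !Rabs_mult, (Rabs_pos_eq (beta + 1)) in Hle by lra. exact Hle. }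
  pose proof (Rabs_pos (Derive_n g 2 T)).
  unfold Phi_rate. apply Rmult_le_pos; [lra|]. nra.
Qed.

Lemma Phi_eventually_nonincr (c : R) : 1 < c ->
  exists T0, f 0 < T0 /\ forall x y, T0 < x -> x <= y -> Phi h g beta c y <= Phi h g beta c x.
Proof.
  intros Hc. destruct (Phi_rate_nonpos c Hc) as [M HM].
  exists (Rmax M (f 0) + 1). pose proof (Rmax_l M (f 0)); pose proof (Rmax_r M (f 0)).
  split; [lra|]. apply (nonincr_of_deriv _ (Phi_rate g beta c)).
  - intros x Hx. apply Phi_deriv; lra.
  - intros x Hx. apply HM; lra.
Qed.

Lemma Phi_eventually_nondecr (c : R) : c < 1 ->
  exists T0, f 0 < T0 /\ forall x y, T0 < x -> x <= y -> Phi h g beta c x <= Phi h g beta c y.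
Proof.
  intros Hc. destruct (Phi_rate_nonneg c Hc) as [M HM].
  exists (Rmax M (f 0) + 1). pose proof (Rmax_l M (f 0)); pose proof (Rmax_r M (f 0)).
  split; [lra|]. apply (nondecr_of_deriv _ (Phi_rate g beta c)).
  - intros x Hx. apply Phi_deriv; lra.
  - intros x Hx. apply HM; lra.
Qed.

(* prim(g T) is nondecreasing, and prim(g T) + 2 model(T) eventually nonincreasing:
   past T1 the primitive stays in a window of width 2 model(T1). *)
Lemma prim_tail_window : exists T0, f 0 < T0 /\ forall T1 y, T0 < T1 -> g T1 < y ->
  prim h beta (g T1) <= prim h beta y <= prim h beta (g T1) + 2 * model g beta T1.
Proof.
  destruct (Phi_eventually_nonincr 2 ltac:(lra)) as [T0 [HT0 Hdec]].
  exists T0. split; auto. intros T1 y HT1 Hy.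
  destruct (inv_spec H T1 ltac:(lra)) as [HgT1 _].
  pose proof (h_incr h (ext_deriv H) (ext_deriv_pos H) _ _ HgT1 Hy) as Hhy.
  rewrite (h_of_g f h g (ext_agrees H) (inv_spec H)) in Hhy by lra.
  replace (prim h beta y) with (prim h beta (g (h y)))
    by (rewrite (g_of_h f h g (ext_deriv H) (ext_deriv_pos H) (ext_agrees H) (inv_spec H)); auto; lra).
  split.
  - apply (nondecr_of_deriv (fun T => prim h beta (g T)) (fun T => exp (- T / (beta + 1)) * Derive g T) (f 0));
      try lra.
    + intros x Hx. apply prim_g_deriv, Hx.
    + intros x Hx. pose proof (g'_pos H x Hx). pose proof (exp_pos (- x / (beta + 1))). nra.
  - pose proof (Hdec T1 (h y) HT1 ltac:(lra)). pose proof (model_pos (h y) ltac:(lra)).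
    unfold Phi in *. lra.
Qed.

(* Hence prim has a limit at +oo (Cauchy criterion, model -> 0). *)
Lemma prim_converges : exists L : R, is_lim (prim h beta) p_infty L.
Proof.
  destruct prim_tail_window as [T0 [HT0 Hwin]].
  assert (Hc : exists y : R_CompleteSpace,
             filterlim (prim h beta) (Rbar_locally p_infty) (locally y)).
  2:{ destruct Hc as [y Hy]; exists y; exact Hy. }
  apply (proj1 (filterlim_locally_cauchy (U := R_CompleteSpace) (F := Rbar_locally p_infty) (prim h beta))).
  intros eps.
  destruct (at_inf_and _ _ (proj1 (lim_eps _ 0) model_lim0 (eps / 2) ltac:(destruct eps; simpl; lra))
              (at_inf_gt T0)) as [M HM].
  set (T1 := Rmax M T0 + 1).
  assert (HT1 : M < T1 /\ T0 < T1)
    by (unfold T1; pose proof (Rmax_l M T0); pose proof (Rmax_r M T0); lra).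
  destruct (HM T1 (proj1 HT1)) as [HB1 _].
  rewrite Rminus_0_r, Rabs_pos_eq in HB1 by (left; apply model_pos; lra).
  exists (fun y => g T1 < y). split; [exists (g T1); auto|].
  intros u v Hu Hv. pose proof (Hwin T1 u (proj2 HT1) Hu). pose proof (Hwin T1 v (proj2 HT1) Hv).
  change (Rabs (prim h beta v - prim h beta u) < eps).
  apply Rabs_def1; lra.
Qed.

Lemma calF_g_bounds (e : R) : 0 < e < 1 ->
  at_inf (fun T => (1 - e) * model g beta T <= calF f beta (g T) <= (1 + e) * model g beta T).
Proof.
  intros He. destruct prim_converges as [L HL].
  assert (HPhi : forall c, is_lim (Phi h g beta c) p_infty L).
  { intros c. replace (Finite L) with (Finite (L + c * 0)) by (f_equal; ring).
    apply lim_plus; [|apply lim_scal, model_lim0].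
    apply lim_comp_inf; auto. apply (g_to_inf f h g (ext_deriv H) (ext_deriv_pos H) (ext_agrees H) (inv_spec H)). }
  destruct (Phi_eventually_nonincr (1 + e) ltac:(lra)) as [T1 [HT1 Hdec]].
  destruct (Phi_eventually_nondecr (1 - e) ltac:(lra)) as [T2 [HT2 Hinc]].
  pose proof (ge_lim_of_nonincr _ _ _ Hdec (HPhi (1 + e))) as Hup.
  pose proof (le_lim_of_nondecr _ _ _ Hinc (HPhi (1 - e))) as Hlo.
  exists (Rmax T1 T2). intros T HT. pose proof (Rmax_l T1 T2); pose proof (Rmax_r T1 T2).
  specialize (Hup T ltac:(lra)). specialize (Hlo T ltac:(lra)). unfold Phi in *.
  rewrite (calF_value h beta (ext_deriv H) f L (ext_agrees H) HL) by (apply (inv_spec H); lra).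
  lra.
Qed.

Lemma calF_g_equiv : is_lim (fun T => calF f beta (g T) / model g beta T) p_infty 1.
Proof.
  apply (proj2 (lim_eps _ 1)); intros eps Heps.
  set (e := Rmin (eps / 2) (1 / 2)).
  assert (He : 0 < e /\ e <= 1/2 /\ e < eps).
  { unfold e. pose proof (Rmin_l (eps/2) (1/2)); pose proof (Rmin_r (eps/2) (1/2)).
    split; [apply Rmin_glb_lt; lra| lra]. }
  apply (at_inf_impl _ _ (at_inf_and _ _ (calF_g_bounds e ltac:(lra)) (at_inf_gt (f 0)))).
  intros T [[Hlo Hup] HT]. pose proof (model_pos T HT) as HB.
  replace (calF f beta (g T) / model g beta T - 1)
    with ((calF f beta (g T) - model g beta T) / model g beta T) by (field; lra).
  unfold Rdiv. rewrite Rabs_mult, Rabs_inv, (Rabs_pos_eq (model g beta T)) by lra.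
  apply (Rmult_lt_reg_r (model g beta T)); [lra|].
  rewrite Rmult_assoc, Rinv_l, Rmult_1_r by lra.
  apply Rabs_def1; nra.
Qed.

(* Increments of g over steps d <= 1 are at least d g'(z) / e, because ln g'
   varies by at most 1 over such steps. *)
Lemma g_step_lower : exists M, forall z d, M < z -> 0 < d <= 1 ->
  d * exp (-1) * Derive g z <= g (z + d) - g z /\
  d * exp (-1) * Derive g z <= g z - g (z - d).
Proof.
  destruct (g'_slowly_varying 1 Rlt_0_1) as [M HM].
  set (N := Rmax M (f 0)).
  assert (Hnear : forall c z, N < c -> N < z -> Rabs (c - z) <= 1 ->
                    exp (-1) * Derive g z <= Derive g c).
  { intros c z Hc Hz Hcz. pose proof (Rmax_l M (f 0)); pose proof (Rmax_r M (f 0)).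
    specialize (HM c z ltac:(unfold N in *; lra) ltac:(unfold N in *; lra)).
    pose proof (g'_pos H c ltac:(unfold N in *; lra)); pose proof (g'_pos H z ltac:(unfold N in *; lra)).
    rewrite <- (exp_ln (Derive g z)) at 1 by lra. rewrite <- (exp_ln (Derive g c)) by lra.
    rewrite <- exp_plus. apply Rabs_le_between in HM.
    assert (Hle : -1 + ln (Derive g z) <= ln (Derive g c)) by lra.
    destruct (Rle_lt_or_eq_dec _ _ Hle) as [Hl|Heq]; [left; apply exp_increasing, Hl | rewrite Heq; lra]. }
  assert (Hderiv : forall c, N < c -> derivable_pt_lim g c (Derive g c)).
  { intros c Hc. apply is_derive_Reals, (g_deriv1 H). pose proof (Rmax_r M (f 0)). unfold N in *. lra. }
  exists (N + 1). intros z d Hz Hd. split.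
  - destruct (MVT_cor2 g (Derive g) z (z + d)) as [c [Hc Hcr]]; [lra | intros; apply Hderiv; lra |].
    pose proof (Hnear c z ltac:(lra) ltac:(lra) ltac:(apply Rabs_le; lra)).
    replace (z + d - z) with d in Hc by ring. rewrite Hc. nra.
  - destruct (MVT_cor2 g (Derive g) (z - d) z) as [c [Hc Hcr]]; [lra | intros; apply Hderiv; lra |].
    pose proof (Hnear c z ltac:(lra) ltac:(lra) ltac:(apply Rabs_le; lra)).
    replace (z - (z - d)) with d in Hc by ring. rewrite Hc. nra.
Qed.

Lemma h_close_of_g_close (Z U : R -> R)
  (HZ : is_lim Z p_infty p_infty) (HU0 : at_inf (fun t => 0 <= U t))
  (HUZ : is_lim (fun t => (U t - g (Z t)) / Derive g (Z t)) p_infty 0) :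
  is_lim (fun t => h (U t) - Z t) p_infty 0.
Proof.
  destruct g_step_lower as [M HM].
  pose proof (h_incr h (ext_deriv H) (ext_deriv_pos H)) as Hinc.
  pose proof (h_of_g f h g (ext_agrees H) (inv_spec H)) as Hhg.
  apply (proj2 (lim_eps _ 0)); intros eps Heps.
  set (d := Rmin (eps / 2) 1).
  assert (Hd : 0 < d /\ d <= 1 /\ d < eps).
  { unfold d. pose proof (Rmin_l (eps/2) 1); pose proof (Rmin_r (eps/2) 1).
    split; [apply Rmin_glb_lt; lra| lra]. }
  assert (Hde : 0 < d * exp (-1)) by (apply Rmult_lt_0_compat; [lra|apply exp_pos]).
  pose proof (proj1 (lim_eps _ 0) HUZ _ Hde) as E1.
  pose proof (proj1 (lim_pinf_eps Z) HZ (Rmax M (f 0) + 1)) as E2.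
  apply (at_inf_impl _ _ (at_inf_and _ _ E1 (at_inf_and _ _ E2 HU0))).
  intros t [H1 [H2 H3]]. rewrite Rminus_0_r in *.
  set (z := Z t) in *. pose proof (Rmax_l M (f 0)); pose proof (Rmax_r M (f 0)).
  pose proof (g'_pos H z ltac:(lra)) as Hgz.
  assert (Hclose : Rabs (U t - g z) < d * exp (-1) * Derive g z).
  { unfold Rdiv in H1. rewrite Rabs_mult, Rabs_inv, (Rabs_pos_eq (Derive g z)) in H1 by lra.
    apply (Rmult_lt_compat_r (Derive g z)) in H1; auto.
    rewrite Rmult_assoc, Rinv_l, Rmult_1_r in H1 by lra. exact H1. }
  apply Rabs_def2 in Hclose. destruct (HM z d ltac:(lra) ltac:(lra)) as [Hup Hlo].
  pose proof (Hinc _ _ H3 (ltac:(lra) : U t < g (z + d))) as Hright.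
  pose proof (Hinc _ _ (proj1 (inv_spec H (z - d) ltac:(lra))) (ltac:(lra) : g (z - d) < U t))
    as Hleft.
  rewrite Hhg in Hright, Hleft by lra.
  apply Rabs_def1; lra.
Qed.

(* model(w)/model(Z) = e^{-(w-Z)/(beta+1)} g'(w)/g'(Z) -> 1 when w - Z -> 0. *)
Lemma model_ratio (w Z : R -> R) (HZ : is_lim Z p_infty p_infty)
  (HwZ : is_lim (fun t => w t - Z t) p_infty 0) :
  is_lim (fun t => model g beta (w t) / model g beta (Z t)) p_infty 1.
Proof.
  assert (Hpos : at_inf (fun x => 0 < Derive g x)) by (exists (f 0); apply (g'_pos H)).
  apply (lim_ext_at_inf (fun t => exp (- (w t - Z t) / (beta + 1)) * (Derive g (w t) / Derive g (Z t)))).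
  - apply (at_inf_impl _ _ (proj1 (lim_pinf_eps Z) HZ (f 0))). intros t Ht.
    pose proof (g'_pos H _ Ht). unfold model.
    unfold Rminus, Rdiv. rewrite Ropp_plus_distr, Rmult_plus_distr_r, exp_plus.
    replace (- - Z t * / (beta + 1)) with (- (- Z t * / (beta + 1))) by ring. rewrite exp_Ropp.
    pose proof (exp_pos (- Z t * / (beta + 1))). field. repeat split; lra.
  - replace (Finite 1) with (Finite (exp (- 0 / (beta + 1)) * 1))
      by (f_equal; rewrite Ropp_0; unfold Rdiv; rewrite Rmult_0_l, exp_0; ring).
    apply lim_mult; [|apply ratio_lim1; auto; apply g'_slowly_varying].
    apply lim_exp. unfold Rdiv. apply lim_mult; [|apply is_lim_const].
    apply (is_lim_opp (fun t => w t - Z t) p_infty 0). auto.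
Qed.

Lemma calF_equiv_along (w Z : R -> R) (HZ : is_lim Z p_infty p_infty)
  (HwZ : is_lim (fun t => w t - Z t) p_infty 0) :
  is_lim (fun t => calF f beta (g (w t)) / model g beta (Z t)) p_infty 1.
Proof.
  pose proof (lim_pinf_close w Z HZ HwZ) as Hw.
  apply (lim_ext_at_inf (fun t => calF f beta (g (w t)) / model g beta (w t)
                                  * (model g beta (w t) / model g beta (Z t)))).
  - apply (at_inf_impl _ _ (at_inf_and _ _ (proj1 (lim_pinf_eps w) Hw (f 0))
                                             (proj1 (lim_pinf_eps Z) HZ (f 0)))).
    intros t [Hwt HZt]. pose proof (model_pos _ Hwt). pose proof (model_pos _ HZt).
    field. lra.
  - replace (Finite 1) with (Finite (1 * 1)) by (f_equal; ring).
    apply lim_mult; [|apply model_ratio; auto].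
    apply (lim_comp_inf (fun T => calF f beta (g T) / model g beta T) w 1 calF_g_equiv Hw).
Qed.

End ModelComparison.

(* The factor G = g' + (beta+1) g'' ln g' and the argument Z of g in the expansion
   of Theorem 1.1, written in the variable t = -theta ln r + ln lam. *)
Definition corr (g : R -> R) (beta s : R) : R :=
  Derive g s + (beta + 1) * Derive_n g 2 s * ln (Derive g s).

Definition Zarg (g : R -> R) (beta c1 c2 t : R) : R :=
  c1 + t + (beta + 1) * ln (corr g beta (t + c2)).

Section ExpansionAsymptotics.
Variables f h g : R -> R.
Variable beta : R.
Hypothesis H : inverse_data f h g.
Hypothesis beta_nonneg : 0 <= beta.
Hypothesis hypA3 : forall hh : R -> R, littleo_t hh ->
  is_lim (fun t => Derive g t / Derive g (t + hh t)) p_infty 1.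
Hypothesis hypA4 : is_lim (fun t => Derive_n g 2 t / Derive g t * ln (Derive g t)) p_infty 0.

Lemma corr_ratio : is_lim (fun s => corr g beta s / Derive g s) p_infty 1.
Proof.
  apply (lim_ext_at_inf (fun s => 1 + (beta + 1) * (Derive_n g 2 s / Derive g s * ln (Derive g s)))).
  - exists (f 0). intros t Ht. pose proof (g'_pos H t Ht). unfold corr. field. lra.
  - replace (Finite 1) with (Finite (1 + (beta + 1) * 0)) by (f_equal; ring).
    apply lim_plus; [apply is_lim_const | apply lim_scal, hypA4].
Qed.

Lemma corr_pos : at_inf (fun s => 0 < corr g beta s).
Proof.
  apply (at_inf_impl _ _ (at_inf_and _ _ (proj1 (lim_eps _ 1) corr_ratio (1/2) ltac:(lra))
                                          (at_inf_gt (f 0)))).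
  intros t [H1 H2]. pose proof (g'_pos H t H2).
  assert (0 < corr g beta t / Derive g t) by (apply Rabs_def2 in H1; lra).
  replace (corr g beta t) with (corr g beta t / Derive g t * Derive g t) by (field; lra).
  apply Rmult_lt_0_compat; auto.
Qed.

Lemma ln_corr_little_o : is_lim (fun s => ln (corr g beta s) / s) p_infty 0.
Proof.
  pose proof (log_little_o _ (g'_slowly_varying f h g H)) as Hlno.
  apply (lim_ext_at_inf (fun s => ln (Derive g s) / s + ln (corr g beta s / Derive g s) * / s)).
  - apply (at_inf_impl _ _ (at_inf_and _ _ corr_pos (at_inf_gt (Rmax (f 0) 0)))). intros t [H1 H2].
    pose proof (Rmax_l (f 0) 0); pose proof (Rmax_r (f 0) 0).
    pose proof (g'_pos H t ltac:(lra)).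
    rewrite ln_div by auto. field. lra.
  - replace (Finite 0) with (Finite (0 + ln 1 * 0)) by (rewrite ln_1; f_equal; ring).
    apply lim_plus; auto. apply lim_mult; [apply lim_ln; [apply corr_ratio | lra] | apply lim_inv_id].
Qed.

Lemma Zarg_offset_little_o (c1 c2 : R) :
  littleo_t (fun t => c1 + (beta + 1) * ln (corr g beta (t + c2))).
Proof.
  unfold littleo_t.
  apply (lim_ext_at_inf (fun t => c1 * / t
           + (beta + 1) * (ln (corr g beta (t + c2)) / (t + c2)) * (1 + c2 * / t))).
  - exists (Rabs c2 + 1). intros t Ht. pose proof (Rle_abs (- c2)). rewrite Rabs_Ropp in H0.
    pose proof (Rabs_pos c2). field. split; lra.
  - replace (Finite 0) with (Finite (c1 * 0 + (beta + 1) * 0 * (1 + c2 * 0))) by (f_equal; ring).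
    apply lim_plus; [apply lim_scal, lim_inv_id|].
    apply lim_mult; [apply lim_scal, (lim_shift (fun s => ln (corr g beta s) / s)), ln_corr_little_o|].
    apply lim_plus; [apply is_lim_const | apply lim_scal, lim_inv_id].
Qed.

Lemma Zarg_to_inf (c1 c2 : R) : is_lim (Zarg g beta c1 c2) p_infty p_infty.
Proof.
  apply (lim_pinf_ge _ (fun t => t / 2)).
  - apply (at_inf_impl _ _ (at_inf_and _ _
      (proj1 (lim_eps _ 0) (Zarg_offset_little_o c1 c2) (1/2) ltac:(lra)) (at_inf_gt 0))).
    intros t [H1 H2]. rewrite Rminus_0_r in H1. apply Rabs_def2 in H1.
    unfold Rdiv in H1. destruct H1 as [_ H1].
    apply (Rmult_lt_compat_r t) in H1; auto. rewrite Rmult_assoc, Rinv_l, Rmult_1_r in H1 by lra.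
    unfold Zarg. lra.
  - apply lim_pinf_eps. intros A. exists (2 * A). intros; lra.
Qed.

Lemma g'_ratio_at_Zarg (c1 c2 : R) :
  is_lim (fun t => Derive g t / Derive g (Zarg g beta c1 c2 t)) p_infty 1.
Proof.
  refine (lim_ext_at_inf _ _ _ _ (hypA3 _ (Zarg_offset_little_o c1 c2))).
  exists 0. intros t _. unfold Zarg. f_equal. f_equal. ring.
Qed.

Lemma g'_shift_ratio_at_Zarg (c1 c2 : R) :
  is_lim (fun t => Derive g (t + c2) / Derive g (Zarg g beta c1 c2 t)) p_infty 1.
Proof.
  assert (Hshift : is_lim (fun t => Derive g t / Derive g (t + c2)) p_infty 1).
  { apply (hypA3 (fun _ => c2)). unfold littleo_t.
    replace (Finite 0) with (Finite (c2 * 0)) by (f_equal; ring).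
    apply (lim_ext_at_inf (fun t => c2 * / t)); [exists 0; intros; reflexivity|].
    apply lim_scal, lim_inv_id. }
  apply (lim_ext_at_inf (fun t => / (Derive g t / Derive g (t + c2))
                                  * (Derive g t / Derive g (Zarg g beta c1 c2 t)))).
  - apply (at_inf_impl _ _ (at_inf_and _ _ (proj1 (lim_pinf_eps _) (Zarg_to_inf c1 c2) (f 0))
                                          (at_inf_gt (Rmax (f 0) (f 0 - c2))))).
    intros t [HZ Ht]. pose proof (Rmax_l (f 0) (f 0 - c2)); pose proof (Rmax_r (f 0) (f 0 - c2)).
    pose proof (g'_pos H t ltac:(lra)). pose proof (g'_pos H (t + c2) ltac:(lra)).
    pose proof (g'_pos H _ HZ). field. lra.
  - replace (Finite 1) with (Finite (/ 1 * 1)) by (f_equal; field).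
    apply lim_mult; [apply lim_inv; [exact Hshift | lra] | apply g'_ratio_at_Zarg].
Qed.

(* model(Z t) = (beta+1) e^{-(c1+t)/(beta+1)} g'(Z t) / G(t + c2), and the last
   quotient tends to 1. *)
Lemma model_at_Zarg (c1 c2 : R) :
  is_lim (fun t => model g beta (Zarg g beta c1 c2 t) / ((beta + 1) * exp (- (c1 + t) / (beta + 1))))
    p_infty 1.
Proof.
  set (Z := Zarg g beta c1 c2).
  apply (lim_ext_at_inf (fun t => / (Derive g (t + c2) / Derive g (Z t))
                                  * / (corr g beta (t + c2) / Derive g (t + c2)))).
  - destruct corr_pos as [MG HMG].
    apply (at_inf_impl _ _ (at_inf_and _ _ (proj1 (lim_pinf_eps Z) (Zarg_to_inf c1 c2) (f 0))
                                           (at_inf_gt (Rmax (f 0) MG - c2)))).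
    intros t [HZ Ht]. pose proof (Rmax_l (f 0) MG); pose proof (Rmax_r (f 0) MG).
    pose proof (g'_pos H _ HZ). pose proof (g'_pos H (t + c2) ltac:(lra)).
    specialize (HMG (t + c2) ltac:(lra)).
    assert (EZ : exp (- Z t / (beta + 1))
                 = exp (- (c1 + t) / (beta + 1)) / corr g beta (t + c2)).
    { unfold Z, Zarg.
      replace (- (c1 + t + (beta + 1) * ln (corr g beta (t + c2))) / (beta + 1))
        with (- (c1 + t) / (beta + 1) + - ln (corr g beta (t + c2))) by (field; lra).
      rewrite exp_plus, exp_Ropp, exp_ln by auto. reflexivity. }
    unfold model. rewrite EZ.
    pose proof (exp_pos (- (c1 + t) / (beta + 1))). field. repeat split; lra.
  - replace (Finite 1) with (Finite (/ 1 * / 1)) by (f_equal; field).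
    apply lim_mult; apply lim_inv; try lra.
    + apply g'_shift_ratio_at_Zarg.
    + apply (lim_shift (fun s => corr g beta s / Derive g s)), corr_ratio.
Qed.

Lemma relative_error_lim0 (c1 c2 C : R) (U : R -> R)
  (HU : at_inf (fun t => Rabs (U t - g (Zarg g beta c1 c2 t)) <= C * Rabs (Derive_n g 2 t))) :
  is_lim (fun t => (U t - g (Zarg g beta c1 c2 t)) / Derive g (Zarg g beta c1 c2 t)) p_infty 0.
Proof.
  set (Z := Zarg g beta c1 c2).
  apply (lim_dom0 _ (fun t => Rabs C * Rabs (Derive_n g 2 t / Derive g t) * (Derive g t / Derive g (Z t)))).
  - apply (at_inf_impl _ _ (at_inf_and _ _ HU (at_inf_and _ _
             (proj1 (lim_pinf_eps Z) (Zarg_to_inf c1 c2) (f 0)) (at_inf_gt (f 0))))).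
    intros t [HUt [HZ Ht]]. pose proof (g'_pos H _ HZ). pose proof (g'_pos H _ Ht).
    unfold Rdiv. rewrite !Rabs_mult, !Rabs_inv, (Rabs_pos_eq (Derive g (Z t))),
      (Rabs_pos_eq (Derive g t)) by lra.
    replace (Rabs C * (Rabs (Derive_n g 2 t) * / Derive g t) * (Derive g t * / Derive g (Z t)))
      with (Rabs C * Rabs (Derive_n g 2 t) * / Derive g (Z t)) by (field; lra).
    apply Rmult_le_compat_r; [left; apply Rinv_0_lt_compat; lra|].
    pose proof (Rle_abs C). pose proof (Rabs_pos (Derive_n g 2 t)).
    assert (C * Rabs (Derive_n g 2 t) <= Rabs C * Rabs (Derive_n g 2 t))
      by (apply Rmult_le_compat_r; lra).
    unfold Z in *. lra.
  - replace (Finite 0) with (Finite (Rabs C * 0 * 1)) by (f_equal; ring).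
    apply lim_mult; [apply lim_scal, lim_abs0, (g''_ratio H) | apply g'_ratio_at_Zarg].
Qed.

Lemma calF_asymptotic (c1 c2 C : R) (U : R -> R)
  (HU : at_inf (fun t => 0 <= U t /\
          Rabs (U t - g (Zarg g beta c1 c2 t)) <= C * Rabs (Derive_n g 2 t))) :
  is_lim (fun t => calF f beta (U t) / ((beta + 1) * exp (- (c1 + t) / (beta + 1)))) p_infty 1.
Proof.
  set (Z := Zarg g beta c1 c2).
  assert (HU0 : at_inf (fun t => 0 <= U t)) by (apply (at_inf_impl _ _ HU); tauto).
  assert (Hclose : is_lim (fun t => h (U t) - Z t) p_infty 0).
  { apply (h_close_of_g_close f h g H Z U (Zarg_to_inf c1 c2) HU0).
    apply (relative_error_lim0 c1 c2 C U). apply (at_inf_impl _ _ HU); tauto. }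
  apply (lim_ext_at_inf (fun t => calF f beta (g (h (U t))) / model g beta (Z t)
                          * (model g beta (Z t) / ((beta + 1) * exp (- (c1 + t) / (beta + 1)))))).
  - apply (at_inf_impl _ _ (at_inf_and _ _ HU0 (proj1 (lim_pinf_eps Z) (Zarg_to_inf c1 c2) (f 0)))).
    intros t [Ht HZ]. pose proof (model_pos f h g beta H beta_nonneg _ HZ).
    pose proof (exp_pos (- (c1 + t) / (beta + 1))).
    rewrite (g_of_h f h g (ext_deriv H) (ext_deriv_pos H) (ext_agrees H) (inv_spec H)) by auto.
    field. lra.
  - replace (Finite 1) with (Finite (1 * 1)) by (f_equal; ring).
    apply lim_mult; [apply (calF_equiv_along f h g beta H beta_nonneg); auto; apply Zarg_to_inf|].
    apply model_at_Zarg.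
Qed.

End ExpansionAsymptotics.

(* Theorem 1.1 in the variable t = -theta ln r: with r = e^{-t/theta},
   tau = t + c2 and -theta ln r = t, so u(e^{-t/theta}) = g(Z t) + O(g''(t)). *)
Lemma solution_expansion (f g : R -> R) (alpha beta gamma lam : R) (u : R -> R)
  (Htheta : 0 < gamma + 2 + beta - alpha) (Hb : 0 <= beta)
  (Hsol : thm11_solution f g alpha beta gamma lam u) :
  let theta := gamma + 2 + beta - alpha in
  let c1 := ln (Rpower theta (beta + 1) * (alpha - beta - 1)) - ln lam in
  let c2 := ln (beta + 1) - ln lam in
  exists C, at_inf (fun t => 0 <= u (exp (- t / theta)) /\
    Rabs (u (exp (- t / theta)) - g (Zarg g beta c1 c2 t)) <= C * Rabs (Derive_n g 2 t)).
Proof.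
  intros theta c1 c2.
  assert (Hth : 0 < theta) by exact Htheta.
  destruct Hsol as (Hlam & _ & _ & _ & _ & Hu0 & _ & _ & _ & [C [eta [Heta Hasym]]]).
  exists C. set (m := Rmin eta 1).
  assert (Hm : 0 < m /\ m <= eta /\ m <= 1)
    by (unfold m; split; [apply Rmin_glb_lt; lra| split; [apply Rmin_l|apply Rmin_r]]).
  exists (theta * Rabs (ln m)). intros t Ht.
  set (r := exp (- t / theta)).
  assert (Hlr : ln r = - t / theta) by (unfold r; apply ln_exp).
  assert (Hr : 0 < r < m).
  { split; [apply exp_pos|]. unfold r. rewrite <- (exp_ln m) by lra. apply exp_increasing.
    assert (Rabs (ln m) < t / theta).
    { apply (Rmult_lt_reg_l theta); auto. unfold Rdiv. rewrite <- Rmult_assoc, Rinv_r_simpl_m by lra. lra. }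
    pose proof (Rle_abs (- ln m)). rewrite Rabs_Ropp in H0. unfold Rdiv in *. lra. }
  split; [apply Hu0; lra|].
  specialize (Hasym r ltac:(lra)). cbv zeta in Hasym. fold theta in Hasym.
  assert (Etau : ln ((beta + 1) / (lam * Rpower r theta)) = t + c2).
  { unfold Rpower. rewrite Hlr, ln_div, ln_mult, ln_exp; try lra; try apply exp_pos.
    - unfold c2. field. lra.
    - apply Rmult_lt_0_compat; auto; apply exp_pos. }
  assert (Erp : ln (Rpower r (- theta)) = t) by (unfold Rpower; rewrite ln_exp, Hlr; field; lra).
  rewrite Etau, Erp in Hasym.
  replace (Zarg g beta c1 c2 t) with
    (ln (Rpower theta (beta + 1) * (alpha - beta - 1)) - ln lam - theta * ln r
     + (beta + 1) * ln (Derive_n g 1 (t + c2)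
                        + (beta + 1) * Derive_n g 2 (t + c2) * ln (Derive_n g 1 (t + c2)))).
  - exact Hasym.
  - rewrite Hlr. unfold Zarg, corr, c1. simpl.
    change (fun x : R => g x) with g. change (fun x : R => Derive g x) with (Derive g).
    replace (theta * (- t / theta)) with (- t) by (field; lra). ring.
Qed.

Lemma power_form (alpha beta theta lam r : R) :
  0 < theta -> 0 <= beta -> beta + 1 < alpha -> 0 < r ->
  (beta + 1) / theta * Rpower (alpha - beta - 1) (- (1 / (beta + 1))) * Rpower r (theta / (beta + 1))
  = (beta + 1) * exp (- (ln (Rpower theta (beta + 1) * (alpha - beta - 1)) - ln lam
                          + (- theta * ln r + ln lam)) / (beta + 1)).
Proof.
  intros Hth Hb Hal Hr.
  rewrite ln_mult by (try apply exp_pos; lra).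
  assert (Eth : ln (Rpower theta (beta + 1)) = (beta + 1) * ln theta) by (unfold Rpower; apply ln_exp).
  rewrite Eth. unfold Rpower.
  replace ((beta + 1) / theta) with ((beta + 1) * exp (- ln theta))
    by (rewrite exp_Ropp, exp_ln by lra; field; lra).
  rewrite !Rmult_assoc. f_equal. rewrite <- !exp_plus. f_equal. field. lra.
Qed.

Lemma log_change_of_variable (F : R -> R) (theta a : R) :
  0 < theta -> is_lim F p_infty 1 ->
  filterlim (fun r => F (- theta * ln r + a) - 1) (at_right 0) (locally 0).
Proof.
  intros Hth HF. apply filterlim_locally. intros eps.
  destruct (proj1 (lim_eps _ 1) HF eps (cond_pos eps)) as [M HM].
  assert (Hd : 0 < exp ((a - M) / theta)) by apply exp_pos.
  exists (mkposreal _ Hd). intros r Hr Hr0.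
  change (Rabs (r - 0) < exp ((a - M) / theta)) in Hr.
  rewrite Rminus_0_r, Rabs_pos_eq in Hr by lra.
  change (Rabs (F (- theta * ln r + a) - 1 - 0) < eps). rewrite Rminus_0_r.
  apply HM. apply ln_increasing in Hr; auto. rewrite ln_exp in Hr.
  apply (Rmult_lt_compat_l theta) in Hr; [|lra].
  replace (theta * ((a - M) / theta)) with (a - M) in Hr by (field; lra). lra.
Qed.

Theorem mainTheorem18
  (f g : R -> R) (alpha beta gamma : R)
  (Hg : forall t, f 0 <= t -> 0 <= g t /\ f (g t) = t)
  (HA : hypA f g alpha beta gamma)
  (lam : R) (u : R -> R)
  (Hsol : thm11_solution f g alpha beta gamma lam u) :
  let theta := gamma + 2 + beta - alpha in
  let ustar := fun r => u (r * Rpower lam (- (1 / theta))) in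
  let K := (beta + 1) / theta * Rpower (alpha - beta - 1) (- (1 / (beta + 1))) in
  exists delta : R -> R,
    filterlim delta (at_right 0) (locally 0) /\
    exists eta : R, 0 < eta /\
      forall r, 0 < r < eta ->
        calF f beta (ustar r) = K * Rpower r (theta / (beta + 1)) * (1 + delta r).
Proof.
  intros theta ustar K.
  destruct (inverse_data_of_hypA f g alpha beta gamma Hg HA) as [h H].
  destruct HA as (_ & _ & _ & _ & HA3 & HA4 & _ & _ & _ & _ & Hal & Hb & Hth).
  assert (Hlam : 0 < lam) by apply Hsol.
  assert (Htheta : 0 < theta) by (unfold theta; lra).
  destruct (solution_expansion f g alpha beta gamma lam u Hth ltac:(lra) Hsol) as [C HU].
  pose proof (calF_asymptotic f h g beta H ltac:(lra) HA3 HA4 _ _ C _ HU) as Hlim.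
  (* with t = -theta ln r + ln lam, ustar r = u(e^{-t/theta}) and K r^{theta/(beta+1)}
     is the normalising factor of calF_asymptotic *)
  assert (Hpos : forall r, 0 < r -> 0 < K * Rpower r (theta / (beta + 1))).
  { intros r Hr. apply Rmult_lt_0_compat; [|apply exp_pos].
    apply Rmult_lt_0_compat; [apply Rdiv_lt_0_compat; lra | apply exp_pos]. }
  exists (fun r => calF f beta (ustar r) / (K * Rpower r (theta / (beta + 1))) - 1).
  split.
  - eapply filterlim_ext_loc; [|apply (log_change_of_variable _ theta (ln lam) ltac:(lra) Hlim)].
    exists (mkposreal 1 Rlt_0_1). intros r _ Hr. simpl.
    unfold K. rewrite (power_form alpha beta theta lam r) by lra. unfold ustar, Rpower.
    do 4 f_equal. rewrite <- (exp_ln r) at 2 by auto. rewrite <- exp_plus. f_equal.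
    unfold theta in *. field. lra.
  - exists 1. split; [lra|]. intros r [Hr _]. specialize (Hpos r Hr).
    set (N := K * Rpower r (theta / (beta + 1))) in *. field. lra.
Qed.
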